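(* Let $X$ be a reflexive complex Banach space and let $A,B$ be positive self-adjoint operators from $X$ to $X^\ast$ with positive lower bound, such that $\operatorname{dom}J_A^\ast\cap\operatorname{dom}J_B^\ast$ is dense in $X$. Let $J$ be the densely defined operator from $H_A\oplus H_B$ to $X^\ast$ with $\operatorname{dom}J=\{Ax\oplus By: x\in\operatorname{dom}A,\ y\in\operatorname{dom}B\}$ and $J(Ax\oplus By)=Ax+By$. Then $J^{\ast\ast}J^\ast=A\dotplus B$ (the form sum), and $A\dotplus B$ is an extension of $A+B$ (defined on $\operatorname{dom}A\cap\operatorname{dom}B$).
   Context: $X^\ast$ denotes the conjugate dual of $X$ (continuous conjugate-linear functionals on $X$); $X$ is identified with $X^{\ast\ast}$. For $v\in X^\ast$, $x\in X$ write $(v,x):=v(x)$ and $(x,v):=\overline{v(x)}$. An operator $A$ from $X$ to $X^\ast$ is positive if $(Ax,x)\ge0$ for all $x\in\operatorname{dom}A$, has positive lower bound if $(Ax,x)\ge\gamma\|x\|^2$ for some $\gamma>0$ and all $x\in\operatorname{dom}A$; its adjoint $A^\ast$ has domain $\{y\in X:x\mapsto(Ax,y)\text{ continuous on }\operatorname{dom}A\}$ and is determined by $(x,A^\ast y)=(Ax,y)$; $A$ is self-adjoint if $A=A^\ast$. For a positive self-adjoint $A$: $H_A$ is the completion of $\operatorname{ran}A$ with respect to the inner product $[Ax,Ay]_A:=(Ax,y)$; $J_A$ is the operator from $H_A$ to $X^\ast$ with $\operatorname{dom}J_A=\operatorname{ran}A$, $J_A(Ax)=Ax$. Adjoints of operators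 between a Hilbert space $K$ (inner product $[\cdot,\cdot]$) and $X^\ast$: for densely defined $T$ from $K$ to $X^\ast$, $T^\ast$ is the operator from $X$ to $K$ with $\operatorname{dom}T^\ast=\{y\in X:h\mapsto(Th,y)\text{ continuous on }\operatorname{dom}T\}$ and $[h,T^\ast y]=(Th,y)$; for densely defined $S$ from $X$ to $K$, $S^\ast$ is the operator from $K$ to $X^\ast$ with $\operatorname{dom}S^\ast=\{h\in K: y\mapsto[Sy,h]\text{ continuous on }\operatorname{dom}S\}$ and $(S^\ast h,y)=[h,Sy]$ for $y\in\operatorname{dom}S$. $J^{\ast\ast}=(J^\ast)^\ast$. Form sum: $H_{A,B}:=\operatorname{dom}J_A^\ast\cap\operatorname{dom}J_B^\ast$ equipped with the inner product $t(x,y)=[J_A^\ast x,J_A^\ast y]_A+[J_B^\ast x,J_B^\ast y]_B$ is a Hilbert space, dense in $X$, with $t(x,x)\ge\gamma\|x\|^2$. $A\dotplus B$ is the operator with domain $\{x\in H_{A,B}: y\mapsto t(x,y)\text{ continuous on }H_{A,B}\text{ in the norm of }X\}$ and $(A\dotplus B)x$ the element $z\in X^\ast$ with $(z,y)=t(x,y)$ for all $y\in H_{A,B}$. *)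

From HB Require Import structures.
From mathcomp Require Import all_boot all_order all_algebra.
From mathcomp Require Import all_classical all_reals all_analysis.
From mathcomp Require Import complex.
Import Order.TTheory GRing.Theory Num.Theory.

Set Implicit Arguments.
Unset Strict Implicit.
Unset Printing Implicit Defensive.

Local Open Scope ring_scope.
Local Open Scope classical_set_scope.

Section Dual.
Variables (R : realType) (X : normedModType R[i]).
Local Notation C := R[i].

Definition conj_linear (v : X -> C) :=
  forall (a : C) (x y : X), v (a *: x + y) = a^* * v x + v y.

(* X^* : continuous (= bounded) conjugate-linear functionals on X *)
Definition cdual : set (X -> C) :=
  [set v | conj_linear v /\ exists M : C, forall x, `|v x| <= M * `|x|].

Definition dual_norm_le (v : X -> C) (c : C) := forall x, `|v x| <= c * `|x|.

(* X is reflexive: every continuous conjugate-linear functional phi on X^*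
   is of the form  v |-> (x, v) = conj (v x)  for some x in X. *)
Definition reflexive_space :=
  forall phi : (X -> C) -> C,
    (forall (a : C) v w, cdual v -> cdual w ->
        phi (fun z => a * v z + w z) = a^* * phi v + phi w) ->
    (exists M : C, forall v c, cdual v -> 0 <= c -> dual_norm_le v c ->
        `|phi v| <= M * c) ->
    exists x : X, forall v, cdual v -> phi v = (v x)^*.

Definition lin_subspace (D : set X) :=
  D 0 /\ forall (a : C) x y, D x -> D y -> D (a *: x + y).

Definition op_XXs (D : set X) (A : X -> X -> C) :=
  [/\ lin_subspace D,
      (forall (a : C) x y, D x -> D y ->
          A (a *: x + y) = (fun z => a * A x z + A y z))
    & forall x, D x -> cdual (A x)].

Definition op_graph (D : set X) (A : X -> X -> C) : set (X * (X -> C)) :=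
  [set p | D p.1 /\ p.2 = A p.1].

(* adjoint of an operator X -> X^* (as a op_graph):
   y in dom A^*,  A^* y = w   iff  w in X^* and (x, w) = (A x, y) on dom A,
   where (x, w) = conj (w x) and (A x, y) = (A x) y. *)
Definition adj_XXs (G : set (X * (X -> C))) : set (X * (X -> C)) :=
  [set p | cdual p.2 /\ forall q, G q -> (p.2 q.1)^* = q.2 p.1].

Definition selfadjoint (D : set X) (A : X -> X -> C) :=
  dense D /\ op_graph D A = adj_XXs (op_graph D A).

Definition positive_op (D : set X) (A : X -> X -> C) :=
  forall x, D x -> 0 <= A x x.

Definition pos_lower_bound (D : set X) (A : X -> X -> C) :=
  exists g : C, 0 < g /\ forall x, D x -> g * `|x| ^+ 2 <= A x x.

Definition sum_graph (DA : set X) (A : X -> X -> C) (DB : set X) (B : X -> X -> C)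
  : set (X * (X -> C)) :=
  [set p | [/\ DA p.1, DB p.1 & p.2 = (fun z => A p.1 z + B p.1 z)]].

Definition comp_graph (K Y : Type) (G1 : set (X * K)) (G2 : set (K * Y))
  : set (X * Y) :=
  [set p | exists k, G1 (p.1, k) /\ G2 (k, p.2)].

End Dual.

Section Hilbert.
Variables (R : realType) (X : normedModType R[i]).
Local Notation C := R[i].
Variables (H : lmodType C) (ip : H -> H -> C).

Definition is_hilbert :=
  [/\ (forall (a : C) x y z, ip (a *: x + y) z = a * ip x z + ip y z),
      (forall x y, ip y x = (ip x y)^*),
      (forall x, x != 0 -> 0 < ip x x)
    & forall u : nat -> H,
        (forall e : C, 0 < e -> exists N, forall n m, (N <= n)%N -> (N <= m)%N ->
            ip (u n - u m) (u n - u m) < e) ->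
        exists l, forall e : C, 0 < e -> exists N, forall n, (N <= n)%N ->
            ip (u n - l) (u n - l) < e].

(* (H, ip, iota) is a completion of ran A w.r.t. [Ax, Ay]_A := (Ax, y) = (Ax) y :
   iota embeds ran A linearly and isometrically with dense image *)
Definition is_completion (D : set X) (A : X -> X -> C) (iota : (X -> C) -> H) :=
  [/\ is_hilbert,
      (forall (a : C) x y, D x -> D y ->
          iota (A (a *: x + y)) = a *: iota (A x) + iota (A y)),
      (forall x y, D x -> D y -> ip (iota (A x)) (iota (A y)) = A x y)
    & forall h (e : C), 0 < e -> exists x, D x /\
          ip (h - iota (A x)) (h - iota (A x)) < e].

(* op_graph of J_A : H_A -> X^*, dom J_A = ran A, J_A (A x) = A x *)
Definition JA_graph (D : set X) (A : X -> X -> C) (iota : (X -> C) -> H)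
  : set (H * (X -> C)) :=
  [set p | exists x, D x /\ p = (iota (A x), A x)].

(* adjoint of T : K -> X^* (op_graph): [h, T^* y] = (T h, y) = (T h) y *)
Definition adj_KXs (G : set (H * (X -> C))) : set (X * H) :=
  [set p | forall q, G q -> ip q.1 p.2 = q.2 p.1].

(* adjoint of S : X -> K (op_graph): (S^* h, y) = (S^* h) y = [h, S y] *)
Definition adj_XK (G : set (X * H)) : set (H * (X -> C)) :=
  [set p | cdual p.2 /\ forall q, G q -> p.2 q.1 = ip p.1 q.2].

End Hilbert.

Section FormSum.
Variables (R : realType) (X : normedModType R[i]).
Local Notation C := R[i].
Variables (HA HB : lmodType C) (ipA : HA -> HA -> C) (ipB : HB -> HB -> C).
Variables (DA DB : set X) (A B : X -> X -> C).
Variables (iA : (X -> C) -> HA) (iB : (X -> C) -> HB).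

Definition JAs := adj_KXs ipA (JA_graph DA A iA).
Definition JBs := adj_KXs ipB (JA_graph DB B iB).

Definition HAB : set X :=
  [set x | (exists k, JAs (x, k)) /\ (exists k, JBs (x, k))].

(* op_graph of the form sum A \dotplus B:
   x in H_{A,B}, z in X^*, and (z, y) = z y = t(x, y) for all y in H_{A,B} *)
Definition formsum_graph : set (X * (X -> C)) :=
  [set p | cdual p.2 /\ exists kA kB, [/\ JAs (p.1, kA), JBs (p.1, kB) &
      forall y lA lB, JAs (y, lA) -> JBs (y, lB) ->
        p.2 y = ipA kA lA + ipB kB lB]].

Definition ip_sum (h k : HA * HB) : C := ipA h.1 k.1 + ipB h.2 k.2.

Definition J_graph : set ((HA * HB) * (X -> C)) :=
  [set p | exists x y, [/\ DA x, DB y &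
      p = ((iA (A x), iB (B y)), fun z => A x z + B y z)]].

Definition Js := adj_KXs ip_sum J_graph.
Definition Jss := adj_XK ip_sum Js.

End FormSum.

(** The adjoint of [J : H_A (+) H_B -> X^*] splits componentwise,
    [J^* x = J_A^* x (+) J_B^* x], because [dom J] contains the vectors
    [Ax (+) 0] and [0 (+) By].  Hence [z = J^** J^* x] means exactly that
    [z] is a continuous functional with [z y = [J_A^* x, J_A^* y]_A + [J_B^* x, J_B^* y]_B]
    for every [y] in [dom J^* = H_{A,B}], which is the definition of the form sum.
    For [x] in [dom A /\ dom B] one may take [J_A^* x = Ax] and [J_B^* x = Bx]. *)

From HB Require Import structures.
From mathcomp Require Import all_boot all_order all_algebra.
From mathcomp Require Import all_classical all_reals all_analysis.
From mathcomp Require Import complex.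
From mathcomp Require Import ring.
Import Order.TTheory GRing.Theory Num.Theory.

Set Implicit Arguments.
Unset Strict Implicit.
Unset Printing Implicit Defensive.
Local Open Scope ring_scope.
Local Open Scope classical_set_scope.

Section Operators.
Variables (R : realType) (X : normedModType R[i]).

Lemma op_XXs_map0 (D : set X) (A : X -> X -> R[i]) :
  op_XXs D A -> A 0 = fun _ => 0.
Proof.
case=> [[D0 _] linA _]; apply: funext => z.
have /(congr1 (fun f => f z)) /= := linA 1 0 0 D0 D0.
rewrite scaler0 addr0 mul1r => doubled.
by apply: (@addrI _ (A 0 z)); rewrite addr0 -doubled.
Qed.

Lemma ip0l (H : lmodType R[i]) (ip : H -> H -> R[i]) (k : H) :
  (forall (a : R[i]) x y z, ip (a *: x + y) z = a * ip x z + ip y z) ->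
  ip 0 k = 0.
Proof. by move=> linl; have := linl (-1) 0 0 k; rewrite scaler0 add0r mulN1r addNr. Qed.

Lemma completion_map0 (H : lmodType R[i]) (ip : H -> H -> R[i]) (D : set X)
    (A : X -> X -> R[i]) (iota : (X -> R[i]) -> H) :
  op_XXs D A -> is_completion ip D A iota -> iota (A 0) = 0.
Proof.
move=> [[D0 _] _ _] [_ lin_iota _ _].
by have := lin_iota (-1) 0 0 D0 D0; rewrite scaler0 add0r scaleN1r addNr.
Qed.

Lemma cdualD (v w : X -> R[i]) : cdual v -> cdual w -> cdual (fun z => v z + w z).
Proof.
move=> [lin_v [M1 bnd_v]] [lin_w [M2 bnd_w]]; split.
  by move=> a x y; rewrite lin_v lin_w mulrDr; ring.
exists (M1 + M2) => x; rewrite mulrDl.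
by apply: le_trans (ler_normD _ _) _; apply: lerD.
Qed.

End Operators.

Section FormSum.
Variables (R : realType) (X : normedModType R[i]).
Variables (HA HB : lmodType R[i]) (ipA : HA -> HA -> R[i]) (ipB : HB -> HB -> R[i]).
Variables (DA DB : set X) (A B : X -> X -> R[i]).
Variables (iA : (X -> R[i]) -> HA) (iB : (X -> R[i]) -> HB).
Hypotheses (opA : op_XXs DA A) (opB : op_XXs DB B).
Hypotheses (cA : is_completion ipA DA A iA) (cB : is_completion ipB DB B iB).

Local Notation JAs := (JAs ipA DA A iA).
Local Notation JBs := (JBs ipB DB B iB).
Local Notation Js := (Js ipA ipB DA DB A B iA iB).
Local Notation Jss := (Jss ipA ipB DA DB A B iA iB).
Local Notation formsum_graph := (formsum_graph ipA ipB DA DB A B iA iB).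

Lemma Js_JAs x kA kB : Js (x, (kA, kB)) -> JAs (x, kA).
Proof.
have [[DB0 _] _ _] := opB; have [[linB _ _ _] _ _ _] := cB.
move=> Jsx _ [x1 [Dx1 ->]] /=.
have /= := Jsx ((iA (A x1), iB (B 0)), fun z => A x1 z + B 0 z) (ex_intro _ x1
  (ex_intro _ 0 (And3 Dx1 DB0 erefl))).
by rewrite /ip_sum (completion_map0 opB cB) (op_XXs_map0 opB) ip0l // !addr0.
Qed.

Lemma Js_JBs x kA kB : Js (x, (kA, kB)) -> JBs (x, kB).
Proof.
have [[DA0 _] _ _] := opA; have [[linA _ _ _] _ _ _] := cA.
move=> Jsx _ [y1 [Dy1 ->]] /=.
have /= := Jsx ((iA (A 0), iB (B y1)), fun z => A 0 z + B y1 z) (ex_intro _ 0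
  (ex_intro _ y1 (And3 DA0 Dy1 erefl))).
by rewrite /ip_sum (completion_map0 opA cA) (op_XXs_map0 opA) ip0l // !add0r.
Qed.

Lemma JsP x kA kB : Js (x, (kA, kB)) <-> JAs (x, kA) /\ JBs (x, kB).
Proof.
split=> [Jsx | [JAx JBx]]; first by split; [apply: Js_JAs Jsx | apply: Js_JBs Jsx].
move=> _ [x1 [y1 [Dx1 Dy1 ->]]]; rewrite /ip_sum /=.
rewrite (JAx (iA (A x1), A x1)); last by exists x1.
by rewrite (JBx (iB (B y1), B y1)) //; exists y1.
Qed.

Lemma comp_Js_Jss : comp_graph Js Jss = formsum_graph.
Proof.
apply/seteqP; split=> -[x z] /=.
  move=> [[kA kB] [/JsP [JAx JBx] [cz tz]]]; split=> //.
  exists kA, kB; split=> // y lA lB JAy JBy.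
  exact: (tz (y, (lA, lB)) (proj2 (JsP _ _ _) (conj JAy JBy))).
move=> [cz [kA [kB [JAx JBx tz]]]]; exists (kA, kB); split; first exact/JsP.
by split=> // -[y [lA lB]] /JsP [JAy JBy]; apply: tz.
Qed.

Lemma JAs_map x : DA x -> JAs (x, iA (A x)).
Proof. by have [_ _ ipAE _] := cA; move=> Dx _ [x1 [Dx1 ->]] /=; rewrite ipAE. Qed.

Lemma JBs_map x : DB x -> JBs (x, iB (B x)).
Proof. by have [_ _ ipBE _] := cB; move=> Dx _ [x1 [Dx1 ->]] /=; rewrite ipBE. Qed.

Lemma sum_graph_sub_formsum : sum_graph DA A DB B `<=` formsum_graph.
Proof.
have [_ _ cdA] := opA; have [_ _ cdB] := opB.
move=> -[x z] [/= DAx DBx ->]; split; first exact: cdualD (cdA _ DAx) (cdB _ DBx).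
exists (iA (A x)), (iB (B x)); split; [exact: JAs_map | exact: JBs_map |].
move=> y lA lB JAy JBy.
rewrite (JAy (iA (A x), A x)); last by exists x.
by rewrite (JBy (iB (B x), B x)) //; exists x.
Qed.

End FormSum.

(* Reflexivity, self-adjointness, the lower bounds and the density of H_{A,B}
   only make H_A, H_B and the form sum well behaved; the identity itself is
   purely algebraic. *)
Theorem theorem4 (R : realType) (X : completeNormedModType R[i])
  (DA DB : set X) (A B : X -> X -> R[i])
  (HA HB : lmodType R[i]) (ipA : HA -> HA -> R[i]) (ipB : HB -> HB -> R[i])
  (iA : (X -> R[i]) -> HA) (iB : (X -> R[i]) -> HB) :
  reflexive_space X ->
  op_XXs DA A -> op_XXs DB B ->
  positive_op DA A -> positive_op DB B ->
  selfadjoint DA A -> selfadjoint DB B ->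
  pos_lower_bound DA A -> pos_lower_bound DB B ->
  is_completion ipA DA A iA -> is_completion ipB DB B iB ->
  dense (HAB ipA ipB DA DB A B iA iB) ->
  comp_graph (Js ipA ipB DA DB A B iA iB) (Jss ipA ipB DA DB A B iA iB)
    = formsum_graph ipA ipB DA DB A B iA iB
  /\ sum_graph DA A DB B `<=` formsum_graph ipA ipB DA DB A B iA iB.
Proof.
move=> _ opA opB _ _ _ _ _ _ cA cB _.
split; first exact: comp_Js_Jss.
exact: sum_graph_sub_formsum.
Qed.
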